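(* If a variety $\Theta$ is logically perfect, then it is logically regular.
   Context: Setting: variety $\Theta$, infinite variable set $X^0$, $\Gamma^0$ its finite subsets, $W(X)$ the free $\Theta$-algebra on $X$, points $\mu:W(X)\to H$. $\Phi(X)$ is the $X$-sort of the multi-sorted algebra of first-order formulas over $\Theta$ (free multi-sorted Halmos algebra generated by equalities in $W(X)$), with valuation $Val^X_H$ into subsets of $\mathrm{Hom}(W(X),H)$, and $LKer(\mu)=\{u\in\Phi(X):\mu\in Val^X_H(u)\}$. For $\mu:W(X)\to H$ with $a_i=\mu(x_i)$, $Tp^H(\mu)$ is the set of first-order formulas $u(x_1,\dots,x_n;y_1,\dots,y_m)$ over $X^0$ with free variables in $X$ and bound variables in $X^0\setminus X$ such that $u(a_1,\dots,a_n;y_1,\dots,y_m)$ holds in $H$; it is known that $Tp^{H_1}(\mu)=Tp^{H_2}(\nu)$ iff $LKer(\mu)=LKer(\nu)$. Algebras $H_1,H_2\in\Theta$ are isotypic if for every $X\in\Gamma^0$, $\{LKer(\mu)\mid\mu:W(X)\to H_1\}=\{LKer(\nu)\mid\nu:W(X)\to H_2\}$. An algebra $H\in\Theta$ is logically homogeneous if for all points $\mu,\nu:W(X)\to H$, $Tp^H(\mu)=Tp^H(\nu)$ holds iff $\nu=\sigma\mu$ for some automorphism $\sigma$ of $H$. $H$ is logically separable if every $H'\in\Theta$ isotypic to $H$ is isomorphic to $H$. $\Theta$ is logically perfect if every $W(X)$, $X\in\Gamma^0$, is logically homogeneous, and logically regular if every $W(X)$, $X\in\Gamma^0$, is logically separable.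 *)

From mathcomp Require Import all_boot.
From mathcomp Require Import finmap.

Set Implicit Arguments.
Unset Strict Implicit.
Unset Printing Implicit Defensive.

Local Open Scope fset_scope.

Record signature := Signature {
  op :> Type;
  arity : op -> nat }.

Record algebra (S : signature) := Algebra {
  carrier :> Type;
  interp : forall o : S, ('I_(arity o) -> carrier) -> carrier }.

Arguments interp {S} a o _ : rename.

Inductive term (S : signature) (V : Type) : Type :=
| Var : V -> term S V
| App : forall o : S, ('I_(arity o) -> term S V) -> term S V.

Arguments Var {S V} _.
Arguments App {S V} o _.

Fixpoint eval (S : signature) (A : algebra S) (V : Type) (env : V -> A)
  (t : term S V) : A :=
  match t with
  | Var v => env v
  | App o args => interp A o (fun i => eval env (args i))
  end.

Definition is_hom (S : signature) (A B : algebra S) (f : A -> B) : Prop :=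
  forall (o : S) (args : 'I_(arity o) -> A),
    f (interp A o args) = interp B o (fun i => f (args i)).

Definition is_iso (S : signature) (A B : algebra S) (f : A -> B) : Prop :=
  is_hom f /\ bijective f.

(** * Varieties: a variety Theta is given by a set [E] of identities
    (pairs of terms in the variables X^0 = nat); its members are the
    algebras satisfying all of them. *)

Definition identities (S : signature) := term S nat * term S nat -> Prop.

Definition in_variety (S : signature) (E : identities S) (A : algebra S) : Prop :=
  forall p, E p -> forall env : nat -> A, eval env p.1 = eval env p.2.

(** * Free algebra W(X) of Theta over a finite set X of variables
    (X a finite subset of X^0 = nat), given by its universal property. *)

Definition is_free (S : signature) (E : identities S) (X : {fset nat})
  (W : algebra S) (gen : {x : nat | x \in X} -> W) : Prop :=
  in_variety E W /\
  forall H : algebra S, in_variety E H ->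
    forall f : {x : nat | x \in X} -> H,
      (exists h : W -> H, is_hom h /\ forall x, h (gen x) = f x) /\
      (forall h1 h2 : W -> H, is_hom h1 -> is_hom h2 ->
         (forall x, h1 (gen x) = f x) -> (forall x, h2 (gen x) = f x) ->
         forall w, h1 w = h2 w).

Arguments is_free {S} E X W gen.

Inductive formula (S : signature) : Type :=
| FEq  : term S nat -> term S nat -> formula S
| FNot : formula S -> formula S
| FAnd : formula S -> formula S -> formula S
| FOr  : formula S -> formula S -> formula S
| FImp : formula S -> formula S -> formula S
| FEx  : nat -> formula S -> formula S
| FAll : nat -> formula S -> formula S.

Arguments FEq {S} _ _.
Arguments FNot {S} _.
Arguments FAnd {S} _ _.
Arguments FOr {S} _ _.
Arguments FImp {S} _ _.
Arguments FEx {S} _ _.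
Arguments FAll {S} _ _.

Fixpoint tvars_in (S : signature) (P : nat -> bool) (t : term S nat) : Prop :=
  match t with
  | Var v => P v
  | App o args => forall i, tvars_in P (args i)
  end.

Fixpoint fv_in (S : signature) (P : nat -> bool) (u : formula S) : Prop :=
  match u with
  | FEq t s => tvars_in P t /\ tvars_in P s
  | FNot u1 => fv_in P u1
  | FAnd u1 u2 | FOr u1 u2 | FImp u1 u2 => fv_in P u1 /\ fv_in P u2
  | FEx v u1 | FAll v u1 => fv_in (fun x => (x == v) || P x) u1
  end.

Fixpoint bv_in (S : signature) (P : nat -> bool) (u : formula S) : Prop :=
  match u with
  | FEq _ _ => True
  | FNot u1 => bv_in P u1
  | FAnd u1 u2 | FOr u1 u2 | FImp u1 u2 => bv_in P u1 /\ bv_in P u2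
  | FEx v u1 | FAll v u1 => P v /\ bv_in P u1
  end.

(** Evaluation of terms under a partial assignment (so that possibly
    empty algebras are handled correctly): [evalR env t a] means that all
    variables of [t] are assigned and [t] evaluates to [a]. *)
Inductive evalR (S : signature) (A : algebra S) (env : nat -> option A)
  : term S nat -> A -> Prop :=
| evalR_var : forall v a, env v = Some a -> evalR env (Var v) a
| evalR_app : forall (o : S) (args : 'I_(arity o) -> term S nat)
                (vals : 'I_(arity o) -> A),
    (forall i, evalR env (args i) (vals i)) ->
    evalR env (App o args) (interp A o vals).

Definition upd (T : Type) (env : nat -> option T) (v : nat) (a : T) :
  nat -> option T := fun x => if x == v then Some a else env x.

Fixpoint sat (S : signature) (A : algebra S) (env : nat -> option A)
  (u : formula S) : Prop :=
  match u with
  | FEq t s => exists a, evalR env t a /\ evalR env s a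
  | FNot u1 => ~ sat env u1
  | FAnd u1 u2 => sat env u1 /\ sat env u2
  | FOr u1 u2 => sat env u1 \/ sat env u2
  | FImp u1 u2 => sat env u1 -> sat env u2
  | FEx v u1 => exists a : A, sat (upd env v a) u1
  | FAll v u1 => forall a : A, sat (upd env v a) u1
  end.

(** The assignment x_i |-> a_i = mu(x_i), x_i in X, induced by a point
    mu : W(X) -> H (undefined outside X). *)
Definition point_env (S : signature) (X : {fset nat}) (W H : algebra S)
  (gen : {x : nat | x \in X} -> W) (mu : W -> H) : nat -> option H :=
  fun n => omap (fun x => mu (gen x)) (insub n : option {x : nat | x \in X}).

Definition LKer (S : signature) (X : {fset nat}) (W H : algebra S)
  (gen : {x : nat | x \in X} -> W) (mu : W -> H) : formula S -> Prop :=
  fun u => fv_in (fun n => n \in X) u /\ sat (point_env gen mu) u.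

Definition Tp (S : signature) (X : {fset nat}) (W H : algebra S)
  (gen : {x : nat | x \in X} -> W) (mu : W -> H) : formula S -> Prop :=
  fun u => fv_in (fun n => n \in X) u /\ bv_in (fun n => n \notin X) u /\
           sat (point_env gen mu) u.

Definition isotypic (S : signature) (E : identities S) (H1 H2 : algebra S) : Prop :=
  forall (X : {fset nat}) (W : algebra S) (gen : {x : nat | x \in X} -> W),
    is_free E X W gen ->
    (forall mu : W -> H1, is_hom mu ->
       exists nu : W -> H2, is_hom nu /\ forall u, LKer gen mu u <-> LKer gen nu u) /\
    (forall nu : W -> H2, is_hom nu ->
       exists mu : W -> H1, is_hom mu /\ forall u, LKer gen mu u <-> LKer gen nu u).

Definition logically_homogeneous (S : signature) (E : identities S)
  (H : algebra S) : Prop :=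
  forall (X : {fset nat}) (W : algebra S) (gen : {x : nat | x \in X} -> W),
    is_free E X W gen ->
    forall mu nu : W -> H, is_hom mu -> is_hom nu ->
      ((forall u, Tp gen mu u <-> Tp gen nu u) <->
       exists sigma : H -> H, is_iso sigma /\ forall w, nu w = sigma (mu w)).

Definition logically_separable (S : signature) (E : identities S)
  (H : algebra S) : Prop :=
  forall H' : algebra S, in_variety E H' -> isotypic E H H' ->
    exists f : H -> H', is_iso f.

Definition logically_perfect (S : signature) (E : identities S) : Prop :=
  forall (X : {fset nat}) (W : algebra S) (gen : {x : nat | x \in X} -> W),
    is_free E X W gen -> logically_homogeneous E W.

Definition logically_regular (S : signature) (E : identities S) : Prop :=
  forall (X : {fset nat}) (W : algebra S) (gen : {x : nat | x \in X} -> W),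
    is_free E X W gen -> logically_separable E W.

(* Let W = W(X) and let H be isotypic to W.  The identity point of W has a
   counterpart nu : W -> H with the same logical kernel; as term equalities lie
   in that kernel, nu is injective.  Given h in H, adjoin a fresh variable y to
   X and extend nu to a point nu' of W(X + y) sending y to h; isotypy yields a
   point mu' : W(X + y) -> W with the same kernel as nu'.  Restricted to X, mu'
   has the same kernel, hence the same type, as the identity point, so by
   logical homogeneity this restriction is an automorphism sigma of W.  Writing
   sigma^-1 (mu' y) as a term t in X, mu' satisfies the equation y = t, hence
   so does nu', and h = nu (t) lies in the image of nu. *)

From mathcomp Require Import all_boot finmap.
From Stdlib Require Import ClassicalEpsilon FunctionalExtensionality PropExtensionality ProofIrrelevance.

Set Implicit Arguments.
Unset Strict Implicit.
Unset Printing Implicit Defensive.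

Local Open Scope fset_scope.

Section Syntax.
Variable S : signature.

Lemma hom_eval (A B : algebra S) (f : A -> B) (V : Type) (env : V -> A) t :
  is_hom f -> f (eval env t) = eval (fun v => f (env v)) t.
Proof.
move=> hom_f; elim: t => [v|o args IH] //=.
rewrite hom_f; congr (interp B o); apply: functional_extensionality => i; exact: IH.
Qed.

Lemma eq_eval (A : algebra S) (V : Type) (e1 e2 : V -> A) t :
  e1 =1 e2 -> eval e1 t = eval e2 t.
Proof.
move=> e12; elim: t => [v|o args IH] //=.
congr (interp A o); apply: functional_extensionality => i; exact: IH.
Qed.

Lemma sub_tvars_in (P P' : nat -> bool) (t : term S nat) :
  (forall n, P n -> P' n) -> tvars_in P t -> tvars_in P' t.
Proof. by move=> PP'; elim: t => [v|o args IH] /=; [apply: PP' | move=> h i; apply: IH]. Qed.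

Lemma sub_fv_in (u : formula S) (P P' : nat -> bool) :
  (forall n, P n -> P' n) -> fv_in P u -> fv_in P' u.
Proof.
elim: u P P' => [t s|u IH|u1 IH1 u2 IH2|u1 IH1 u2 IH2|u1 IH1 u2 IH2|v u IH|v u IH]
  P P' PP' /=.
- by case=> ht hs; split; apply: sub_tvars_in PP' _.
- exact: IH.
1-3: by case=> h1 h2; split; [apply: IH1 PP' h1 | apply: IH2 PP' h2].
1-2: by apply: IH => n /orP [-> // | /PP' ->]; rewrite orbT.
Qed.

Lemma evalR_eq_env (A : algebra S) (P : nat -> bool) (env1 env2 : nat -> option A) t a :
  (forall n, P n -> env1 n = env2 n) -> tvars_in P t -> evalR env1 t a -> evalR env2 t a.
Proof.
move=> e12 + ev; elim: ev => [v b hv|o args vals _ IH] /=.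
- by move=> Pv; apply: evalR_var; rewrite -e12.
- by move=> Pargs; apply: evalR_app => i; apply: IH.
Qed.

Lemma evalR_tvars_in (A : algebra S) (P : nat -> bool) (env : nat -> option A) t a :
  (forall n, env n <> None -> P n) -> evalR env t a -> tvars_in P t.
Proof.
move=> envP ev; elim: ev => [v b hv|o args vals _ IH] //=.
by apply: envP; rewrite hv.
Qed.

Lemma evalR_inv (A : algebra S) (env : nat -> option A) t b :
  evalR env t b ->
  match t with
  | Var v => env v = Some b
  | App o args =>
      exists vals, (forall i, evalR env (args i) (vals i)) /\ b = interp A o vals
  end.
Proof. by case=> [v a hv|o args vals h] //; exists vals. Qed.

Lemma evalR_functional (A : algebra S) (env : nat -> option A) t a b :
  evalR env t a -> evalR env t b -> a = b.
Proof.
move=> ev; elim: ev b => [v a' hv|o args vals _ IH] b /evalR_inv.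
- by rewrite hv => -[].
- case=> vals' [ev' ->]; congr (interp A o).
  by apply: functional_extensionality => i; apply: IH.
Qed.

Lemma hom_evalR (A B : algebra S) (f : A -> B) (env : nat -> option A)
    (env' : nat -> option B) t a :
  is_hom f -> (forall n, env' n = omap f (env n)) ->
  evalR env t a -> evalR env' t (f a).
Proof.
move=> hom_f envE ev; elim: ev => [v b hv|o args vals _ IH].
- by apply: evalR_var; rewrite envE hv.
- by rewrite hom_f; apply: evalR_app.
Qed.

Lemma sat_eq_env (A : algebra S) (u : formula S) (P : nat -> bool)
    (env1 env2 : nat -> option A) :
  fv_in P u -> (forall n, P n -> env1 n = env2 n) -> (sat env1 u <-> sat env2 u).
Proof.
elim: u P env1 env2 => [t s|u IH|u1 IH1 u2 IH2|u1 IH1 u2 IH2|u1 IH1 u2 IH2|v u IH|v u IH]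
  P env1 env2 /= fvP e12.
- case: fvP => ht hs; have e21 n : P n -> env2 n = env1 n by move/e12.
  split; case=> a [h1 h2]; exists a; split.
  + exact: evalR_eq_env e12 ht h1.
  + exact: evalR_eq_env e12 hs h2.
  + exact: evalR_eq_env e21 ht h1.
  + exact: evalR_eq_env e21 hs h2.
- by rewrite (IH P env1 env2).
1-3: by case: fvP => h1 h2; rewrite (IH1 P env1 env2) // (IH2 P env1 env2).
1-2: have upd12 a : sat (upd env1 v a) u <-> sat (upd env2 v a) u
       by apply: IH fvP _ => n /orP [/eqP -> | Pn]; rewrite /upd ?eqxx //;
          case: eqP => // _; apply: e12.
- by split; case=> a /upd12; exists a.
- by split=> h a; apply/upd12.
Qed.

End Syntax.

Section FreeAlgebra.
Variables (S : signature) (E : identities S) (V : Type).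

Definition eqv_in_variety (t s : term S V) : Prop :=
  forall A : algebra S, in_variety E A -> forall e : V -> A, eval e t = eval e s.

Local Notation "t ~ s" := (eqv_in_variety t s) (at level 70).

(* The class of [t] is the predicate [eqv_in_variety t]; representatives are
   chosen by indefinite description. *)
Definition free_carrier := {P : term S V -> Prop | exists t, P = eqv_in_variety t}.

Definition free_class (t : term S V) : free_carrier :=
  exist _ (eqv_in_variety t) (ex_intro _ t erefl).

Definition free_repr (q : free_carrier) : term S V :=
  proj1_sig (constructive_indefinite_description _ (proj2_sig q)).

Lemma free_reprK : cancel free_repr free_class.
Proof.
move=> [P hP]; rewrite /free_repr /free_class /=.
case: (constructive_indefinite_description _ _) => t /= eP; subst P.
by f_equal; apply: proof_irrelevance.
Qed.

Lemma free_class_eq t s : free_class t = free_class s <-> t ~ s.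
Proof.
split=> [/(congr1 (@proj1_sig _ _)) /= -> | ts]; first by [].
apply: eq_sig_hprop => [P|/=]; first exact: proof_irrelevance.
apply: functional_extensionality => r; apply: propositional_extensionality.
by split=> tr A vA e; rewrite -tr // ts.
Qed.

Lemma free_class_reprK t : free_repr (free_class t) ~ t.
Proof. by apply/free_class_eq; rewrite free_reprK. Qed.

Lemma eqv_in_variety_app o (a b : 'I_(arity o) -> term S V) :
  (forall i, a i ~ b i) -> App o a ~ App o b.
Proof.
move=> ab A vA e /=; congr (interp A o).
by apply: functional_extensionality => i; apply: ab.
Qed.

Definition free_alg : algebra S :=
  @Algebra S free_carrier (fun o args => free_class (App o (fun i => free_repr (args i)))).

Fixpoint subst_term (sg : nat -> term S V) (t : term S nat) : term S V :=
  match t with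
  | Var n => sg n
  | App o args => App o (fun i => subst_term sg (args i))
  end.

Lemma eval_subst_term (A : algebra S) (e : V -> A) sg t :
  eval e (subst_term sg t) = eval (fun n => eval e (sg n)) t.
Proof.
elim: t => [n|o args IH] //=; congr (interp A o).
by apply: functional_extensionality => i; apply: IH.
Qed.

Lemma eval_free_alg (env : nat -> free_alg) t :
  eval env t = free_class (subst_term (fun n => free_repr (env n)) t).
Proof.
elim: t => [n|o args IH] /=; first by rewrite free_reprK.
apply/free_class_eq; apply: eqv_in_variety_app => i.
by apply/free_class_eq; rewrite free_reprK IH.
Qed.

Lemma eval_free_class (t : term S V) :
  eval (fun v => free_class (Var v) : free_alg) t = free_class t.
Proof.
elim: t => [v|o args IH] //=.
apply/free_class_eq; apply: eqv_in_variety_app => i; rewrite IH.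
exact: free_class_reprK.
Qed.

Lemma free_alg_in_variety : in_variety E free_alg.
Proof.
move=> p Ep env; rewrite !eval_free_alg; apply/free_class_eq => A vA e.
by rewrite !eval_subst_term; apply: vA.
Qed.

End FreeAlgebra.

Lemma free_algebra_exists (S : signature) (E : identities S) (X : {fset nat}) :
  exists (W : algebra S) (gen : {x : nat | x \in X} -> W), is_free E X W gen.
Proof.
exists (free_alg E {x : nat | x \in X}), (fun x => free_class E (Var x)).
split=> [|H vH f]; first exact: free_alg_in_variety.
split=> [|h1 h2 hom1 hom2 h1E h2E w].
- exists (fun q => eval f (free_repr q)); split=> [o args | x] /=.
  + exact: (free_class_reprK (App o (fun i => free_repr (args i)))).
  + exact: (free_class_reprK (Var x)).
- rewrite -(free_reprK w) -eval_free_class (hom_eval _ _ hom1) (hom_eval _ _ hom2).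
  by apply: eq_eval => v; rewrite h1E h2E.
Qed.

Section Points.
Variables (S : signature) (X : {fset nat}) (W : algebra S).
Variable gen : {x : nat | x \in X} -> W.

Lemma point_envE (H : algebra S) (mu : W -> H) n (Xn : n \in X) :
  point_env gen mu n = Some (mu (gen (exist _ n Xn))).
Proof. by rewrite /point_env (insubT (fun n => n \in X) Xn). Qed.

Lemma point_env_dom (H : algebra S) (mu : W -> H) n :
  point_env gen mu n <> None -> n \in X.
Proof. by case Xn: (n \in X); rewrite // /point_env insubN ?Xn. Qed.

Lemma point_env_comp (H H' : algebra S) (mu : W -> H) (f : H -> H') (mu' : W -> H') n :
  (forall w, mu' w = f (mu w)) -> point_env gen mu' n = omap f (point_env gen mu n).
Proof. by move=> mu'E; rewrite /point_env; case: (insub n) => //= x; rewrite mu'E. Qed.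

Lemma point_evalR (H : algebra S) (mu : W -> H) t w :
  is_hom mu -> evalR (point_env gen id) t w -> evalR (point_env gen mu) t (mu w).
Proof. by move=> hom_mu; apply: hom_evalR hom_mu _ => n; apply: point_env_comp. Qed.

Lemma LKer_sub_evalR (H1 H2 : algebra S) (mu : W -> H1) (nu : W -> H2) t s a :
  (forall u, LKer gen mu u -> LKer gen nu u) ->
  evalR (point_env gen mu) t a -> evalR (point_env gen mu) s a ->
  exists b, evalR (point_env gen nu) t b /\ evalR (point_env gen nu) s b.
Proof.
move=> mu_nu ta sa; have dom := @point_env_dom H1 mu.
have fv_ts : fv_in (fun n => n \in X) (FEq t s).
  by split; [apply: evalR_tvars_in dom ta | apply: evalR_tvars_in dom sa].
by case: (mu_nu _ (conj fv_ts (ex_intro _ a (conj ta sa)))).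
Qed.

Lemma Tp_LKer (H1 H2 : algebra S) (mu : W -> H1) (nu : W -> H2) :
  (forall u, LKer gen mu u <-> LKer gen nu u) -> forall u, Tp gen mu u <-> Tp gen nu u.
Proof.
move=> mu_nu u; rewrite /Tp.
split=> -[fvu [bvu satu]]; do 2 split => //.
- by case: ((mu_nu u).1 (conj fvu satu)).
- by case: ((mu_nu u).2 (conj fvu satu)).
Qed.

Variable E : identities S.
Hypothesis freeW : is_free E X W gen.

Lemma free_point_env (H : algebra S) (e : nat -> H) : in_variety E H ->
  exists mu : W -> H, is_hom mu /\ forall n, n \in X -> point_env gen mu n = Some (e n).
Proof.
move=> vH; have [[mu [hom_mu muE]] _] := freeW.2 H vH (fun x => e (val x)).
by exists mu; split=> // n Xn; rewrite (point_envE _ Xn) muE.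
Qed.

(* Freeness makes the subalgebra of term values receive a homomorphism from W
   fixing the generators; uniqueness forces it to be the identity. *)
Lemma free_term_exists w : exists t, evalR (point_env gen id) t w.
Proof.
have [vW univW] := freeW.
pose P (w : W) := exists t, evalR (point_env gen id) t w.
have P_app o (args : 'I_(arity o) -> {w | P w}) : P (interp W o (fun i => proj1_sig (args i))).
  pose ts i := proj1_sig (constructive_indefinite_description _ (proj2_sig (args i))).
  exists (App o ts); apply: evalR_app => i; rewrite /ts.
  by case: (constructive_indefinite_description _ _).
pose B := @Algebra S {w | P w} (fun o args => exist _ _ (P_app o args)).
have hom_val : is_hom (fun b : B => proj1_sig b) by [].
have vB : in_variety E B.
  move=> p Ep env; apply: eq_sig_hprop => [b|]; first exact: proof_irrelevance.
  by rewrite !(hom_eval _ _ hom_val); apply: vW.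
have P_gen x : P (gen x).
  exists (Var (proj1_sig x)); apply: evalR_var.
  by case: x => n Xn; rewrite (point_envE _ Xn).
have [[h [hom_h hE]] _] := univW B vB (fun x => exist _ _ (P_gen x)).
have <- : proj1_sig (h w) = w.
  apply: ((univW W vW gen).2 (fun w => proj1_sig (h w)) id) => // [o args | x].
  - by rewrite hom_h.
  - by rewrite hE.
exact: proj2_sig (h w).
Qed.

Lemma LKer_sub_ker (H1 H2 : algebra S) (mu : W -> H1) (nu : W -> H2) :
  is_hom mu -> is_hom nu -> (forall u, LKer gen mu u -> LKer gen nu u) ->
  forall w1 w2, mu w1 = mu w2 -> nu w1 = nu w2.
Proof.
move=> hom_mu hom_nu mu_nu w1 w2 e12.
have [t1 ev1] := free_term_exists w1; have [t2 ev2] := free_term_exists w2.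
have := point_evalR hom_mu ev2; rewrite -e12 => ev2'.
have [b [bt1 bt2]] := LKer_sub_evalR mu_nu (point_evalR hom_mu ev1) ev2'.
by rewrite (evalR_functional (point_evalR hom_nu ev1) bt1)
           (evalR_functional (point_evalR hom_nu ev2) bt2).
Qed.

End Points.

Arguments point_envE {S X W gen H} mu {n}.

Lemma LKer_restrict (S : signature) (X Y : {fset nat}) (W W' H : algebra S)
    (gen : {x : nat | x \in X} -> W) (gen' : {y : nat | y \in Y} -> W')
    (mu : W -> H) (mu' : W' -> H) :
  {subset X <= Y} -> (forall n, n \in X -> point_env gen mu n = point_env gen' mu' n) ->
  forall u, LKer gen mu u <-> fv_in (fun n => n \in X) u /\ LKer gen' mu' u.
Proof.
move=> XY mu_mu' u; rewrite /LKer; split.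
- case=> fvu satu; do ![split] => //; first exact: sub_fv_in XY fvu.
  by apply/(sat_eq_env fvu mu_mu').
- by case=> fvu [_ satu]; split => //; apply/(sat_eq_env fvu mu_mu').
Qed.

Lemma fresh_notin (X : {fset nat}) : (\max_(i <- X) i).+1 \notin X.
Proof.
apply/negP => /(@leq_bigmax_seq _ _ predT (fun i : nat => i)) /(_ isT).
by rewrite ltnn.
Qed.

Lemma inj_surj_bijective (T1 T2 : Type) (f : T1 -> T2) :
  injective f -> (forall y, exists x, f x = y) -> bijective f.
Proof.
move=> inj_f surj_f.
pose g y := proj1_sig (constructive_indefinite_description _ (surj_f y)).
have gK : cancel g f by move=> y; rewrite /g; case: constructive_indefinite_description.
by exists g => // x; apply: inj_f; rewrite gK.
Qed.

Section Regularity.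
Variables (S : signature) (E : identities S) (X : {fset nat}) (W : algebra S).
Variable gen : {x : nat | x \in X} -> W.
Hypothesis freeW : is_free E X W gen.
Variable H : algebra S.
Hypotheses (varH : in_variety E H) (isoWH : isotypic E W H).
Variable nu : W -> H.
Hypotheses (hom_nu : is_hom nu) (LKer_nu : forall u, LKer gen id u <-> LKer gen nu u).

Lemma LKer_id_injective : injective nu.
Proof.
have hom_id : is_hom (@id W) by [].
by apply: (LKer_sub_ker freeW hom_nu hom_id) => u /LKer_nu.
Qed.

Hypothesis homogW : logically_homogeneous E W.

Lemma LKer_id_surjective h : exists w, nu w = h.
Proof.
set y := (\max_(i <- X) i).+1; have yX : y \notin X := fresh_notin X.
set Y := y |` X; have XY : {subset X <= Y} by move=> n Xn; rewrite in_fset1U Xn orbT.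
have yY : y \in Y by rewrite in_fset1U eqxx.
have [W' [gen' freeW']] := free_algebra_exists E Y.
have [nu' [hom_nu' nu'E]] := free_point_env freeW' (fun n =>
  if n == y then h else odflt h (point_env gen nu n)) varH.
have [_ /(_ nu' hom_nu') [mu' [hom_mu' LKer_mu']]] := isoWH freeW'.
pose w := mu' (gen' (exist _ y yY)).
have [al [hom_al alE]] := free_point_env freeW (fun n => odflt w (point_env gen' mu' n)) freeW.1.
have nu_nu' n : n \in X -> point_env gen nu n = point_env gen' nu' n.
  move=> Xn; rewrite nu'E ?XY // (point_envE _ Xn); case: eqP => // ny.
  by rewrite -ny Xn in yX.
have al_mu' n : n \in X -> point_env gen al n = point_env gen' mu' n.
  by move=> Xn; rewrite alE // (point_envE _ (XY _ Xn)).
have LKer_al u : LKer gen id u <-> LKer gen al u.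
  rewrite LKer_nu (LKer_restrict XY nu_nu') (LKer_restrict XY al_mu').
  by split=> -[fvu /LKer_mu'].
have hom_id : is_hom (@id W) by [].
have [sigma [[hom_sigma [sigma' _ sigma'K]] alE']] :=
  (homogW freeW hom_id hom_al).1 (Tp_LKer LKer_al).
have [t tw] := free_term_exists freeW (sigma' w).
have t_al : evalR (point_env gen' mu') (Var y) w.
  by apply: evalR_var; rewrite (point_envE _ yY).
have tX : tvars_in (fun n => n \in X) t := evalR_tvars_in (@point_env_dom _ _ _ _ _ _) tw.
have t_mu' : evalR (point_env gen' mu') t w.
  apply: evalR_eq_env al_mu' tX _.
  by rewrite -[w]sigma'K; apply: hom_evalR hom_sigma _ tw => n; apply: point_env_comp.
have [b [/evalR_inv yb tb]] := LKer_sub_evalR (fun u => proj1 (LKer_mu' u)) t_al t_mu'.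
exists (sigma' w); apply: evalR_functional (point_evalR hom_nu tw) _.
move: yb; rewrite nu'E // eqxx => -[->].
by apply: evalR_eq_env tX tb => n /nu_nu'.
Qed.

End Regularity.

Theorem theorem3p11 (S : signature) (E : identities S) :
  logically_perfect E -> logically_regular E.
Proof.
move=> perfE X W gen freeW H varH isoWH.
have hom_id : is_hom (@id W) by [].
have [nu [hom_nu LKer_nu]] := (isoWH _ _ _ freeW).1 id hom_id.
exists nu; split => //; apply: inj_surj_bijective.
- exact: (LKer_id_injective freeW hom_nu LKer_nu).
- exact: (LKer_id_surjective freeW varH isoWH hom_nu LKer_nu (perfE _ _ _ freeW)).
Qed.
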